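(* For every $m\ge 2$, the determinant of the $m$th order $2$-dimensional Pascal tensor satisfies $f(m,2)=\left[(m-1)!\right]^m$.
   Context: The $m$th order $n$-dimensional Pascal tensor is $\mathcal{P}=(p_{i_1\dots i_m})$ with $p_{i_1\dots i_m}=\frac{(i_1+\dots+i_m-m)!}{(i_1-1)!\cdots(i_m-1)!}$, $i_1,\dots,i_m\in\{1,\dots,n\}$ (for $m=2$ the symmetric Pascal matrix, with ordinary determinant). The determinant of a symmetric tensor $\mathcal{A}$ is the resultant of the system $\mathcal{A}\mathbf{x}^{m-1}=\mathbf{0}$, where $(\mathcal{A}\mathbf{x}^{m-1})_i=\sum_{i_2,\dots,i_m}a_{i i_2\dots i_m}x_{i_2}\cdots x_{i_m}$; $f(m,n)$ denotes $\det(\mathcal{P})$. For $n=2$ this is the Sylvester resultant of the two binary forms $(\mathcal{P}\mathbf{x}^{m-1})_1=\sum_{k=0}^{m-1}a_kx_1^{m-1-k}x_2^k$ and $(\mathcal{P}\mathbf{x}^{m-1})_2=\sum_{k=0}^{m-1}b_kx_1^{m-1-k}x_2^k$ with $a_k=\binom{m-1}{k}k!$, $b_k=\binom{m-1}{k}(k+1)!$, i.e. the determinant of the $2(m-1)\times 2(m-1)$ matrix whose first $m-1$ rows are successive right-shifts of $(a_0,\dots,a_{m-1},0,\dots,0)$ and whose last $m-1$ rows are successive right-shifts of $(b_0,\dots,b_{m-1},0,\dots,0)$. *)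

From mathcomp Require Import all_boot all_order all_algebra.
Set Implicit Arguments. Unset Strict Implicit. Unset Printing Implicit Defensive.
Import GRing.Theory.
Local Open Scope ring_scope.

(* Entry of the m-th order n-dimensional Pascal tensor, indices 1-based:
   p_{i_1..i_m} = (i_1+...+i_m - m)! / ((i_1-1)! ... (i_m-1)!).
   Indices are given as a sequence s of length m of values in {1..n}. *)
Definition pascal_entry (s : seq nat) : nat :=
  ((\sum_(i <- s) i) - size s)`! %/ (\prod_(i <- s) (i.-1)`!).

(* For n = 2: coefficient of x1^(m-1-k) x2^k in (P x^{m-1})_i, i in {1,2}:
   sum over index tuples (i_2..i_m) with exactly k entries equal to 2,
   i.e. 'C(m-1,k) * p_{i,1,..,1,2,..,2}. *)
Definition pascal2_coef (m i k : nat) : nat :=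
  'C(m.-1, k) * pascal_entry (i :: nseq (m.-1 - k) 1%N ++ nseq k 2%N).

(* Sylvester matrix of the two binary forms (P x^{m-1})_1 and (P x^{m-1})_2:
   size 2(m-1); row r < m-1 is the r-th right shift of (a_0..a_{m-1},0..),
   row m-1+r is the r-th right shift of (b_0..b_{m-1},0..). *)
Definition pascal2_sylvester (m : nat) : 'M[int]_((m.-1) + (m.-1)) :=
  \matrix_(r, c)
    (let i := if (r < m.-1)%N then 1%N else 2%N in
     let sh := if (r < m.-1)%N then nat_of_ord r else (r - m.-1)%N in
     if (sh <= c)%N && (c - sh <= m.-1)%N
     then (pascal2_coef m i (c - sh))%:Z else 0).

(* f(m,2) = det of the 2-dimensional m-th order Pascal tensor (resultant). *)
Definition f2 (m : nat) : int := \det (pascal2_sylvester m).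

(* Put n = m - 1.  The two binary forms have coefficients
   a_k = 'C(n, k) k! = n^_k (falling factorial) and b_k = 'C(n, k) (k+1)!,
   so b_k = (n + 1) a_k - a_(k+1).  For any a with a_0 = 1 and a_k = 0 for
   k > n, the Sylvester matrix S of a and b = c a - a_(.+1) factors as S = E T:
   T is block lower triangular with diagonal blocks 1 and a triangular block
   of diagonal a_n, so det T = a_n^n, and one block column operation makes E
   block triangular with a companion-like corner block of determinant a_n.
   Hence f(m, 2) = a_n^m = (n!)^m. *)

From mathcomp Require Import all_boot all_order all_algebra.
From mathcomp Require Import zify.
Set Implicit Arguments. Unset Strict Implicit. Unset Printing Implicit Defensive.
Import GRing.Theory.
Local Open Scope ring_scope.

Section ShiftRows.

Variables (R : comNzRingType) (n : nat).

Definition shift_rows (u : nat -> R) : 'M[R]_(n, n + n) :=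
  \matrix_(r < n, j < n + n) if (r <= j)%N then u (j - r)%N else 0.

Lemma shift_rowsZB c u v :
  shift_rows (fun k => c * u k - v k) = c *: shift_rows u - shift_rows v.
Proof.
by apply/matrixP => r j; rewrite !mxE; case: ifP => _; rewrite ?mulr0 ?subr0.
Qed.

Definition subdiag_mx : 'M[R]_n := \matrix_(r, k) (k.+1 == r :> nat)%:R.

Lemma subdiag_mulmx p (F : nat -> 'I_p -> R) :
  subdiag_mx *m \matrix_(r < n, j < p) F r j =
  \matrix_(r < n, j < p) if nat_of_ord r is r'.+1 then F r' j else 0.
Proof.
apply/matrixP => -[[|r] lt_r_n] j; rewrite /subdiag_mx !mxE /=.
  by rewrite big1 // => k _; rewrite mxE mul0r.
rewrite (eq_bigr (fun k : 'I_n => if k == r :> nat then F k j else 0)).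
  by rewrite -big_mkcond (big_ord1_eq _ (fun k => F k j)) ltnW.
by move=> k _; rewrite !mxE eqSS; case: eqP; rewrite ?mul1r ?mul0r.
Qed.

Variables (c : R) (a : nat -> R).
Hypotheses (a0 : a 0 = 1) (a_gt : forall k, (n < k)%N -> a k = 0).

Definition tail_rows : 'M[R]_(n, n + n) :=
  \matrix_(r < n, j < n + n) if (r < j)%N then a (j - r)%N else 0.

Definition first_row_mx : 'M[R]_n := \matrix_(r, k) ((r == 0 :> nat)%:R * a k.+1).

Lemma shift_rows_head_tail : row_mx 1%:M 0 + tail_rows = shift_rows a.
Proof.
apply/matrixP => r j; rewrite !mxE; case: splitP => k ->; rewrite !mxE.
  have [->|ne_rk] := eqVneq r k; first by rewrite ltnn leqnn subnn a0 addr0.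
  by rewrite mulr0n add0r [(r <= k)%N]leq_eqVlt (negPf ne_rk : (r == k :> nat) = false).
by rewrite add0r (leq_trans (ltn_ord r) (leq_addr _ _)) ltnW // ltn_addr.
Qed.

Lemma shift_rows_succ :
  row_mx first_row_mx 0 + subdiag_mx *m tail_rows = shift_rows (fun k => a k.+1).
Proof.
rewrite (subdiag_mulmx (fun r (j : 'I__) => if (r < j)%N then a (j - r)%N else 0)).
apply/matrixP => -[[|r] lt_r_n] j; rewrite !mxE /=;
  case: (splitP j) => k ->; rewrite !mxE ?mul1r ?mul0r ?addr0 ?add0r ?subn0 //.
- by rewrite a_gt // ltnS leq_addr.
- by case: ltnP => // lt_r_k; rewrite subnSK.
- by case: ltnP => // lt_r_k; rewrite subnSK.
Qed.

Definition shift_basis : 'M[R]_(n + n) := col_mx (row_mx 1%:M 0) tail_rows.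

Definition shift_coeffs : 'M[R]_(n + n) :=
  block_mx 1%:M 1%:M (c%:M - first_row_mx) (c%:M - subdiag_mx).

(* Row r of [shift_rows u] holds the coefficients of x^r u(x).  Writing
   A = sum a_k x^k, the rows x^r A = x^r + x^r (A - 1) and
   x^r B = c x^r A - x^(r-1) (A - 1) (for r > 0; for r = 0 the correction is
   (A - 1) / x, the row of [first_row_mx]) have coordinates [shift_coeffs] in
   the basis made of the unit rows and the rows x^r (A - 1) of [tail_rows]. *)
Lemma shift_rows_factor :
  col_mx (shift_rows a) (shift_rows (fun k => c * a k - a k.+1)) =
  shift_coeffs *m shift_basis.
Proof.
rewrite mul_block_col !mul1mx shift_rowsZB -shift_rows_succ -shift_rows_head_tail.
rewrite !mulmxBl !mul_scalar_mx mul_mx_row mulmx1 mulmx0 scalerDr.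
by rewrite opprD addrACA.
Qed.

Lemma det_shift_basis : \det shift_basis = a n ^+ n.
Proof.
rewrite /shift_basis -[tail_rows]hsubmxK det_lblock det1 mul1r det_trig.
  rewrite (eq_bigr (fun=> a n)) ?prodr_const ?card_ord // => i _.
  by rewrite !mxE addnK ltn_addr.
apply/is_trig_mxP => i j lt_i_j; rewrite !mxE ltn_addr // a_gt //.
by rewrite -addnBA ?(ltnW lt_i_j) // -[X in (X < _)%N]addn0 ltn_add2l subn_gt0.
Qed.

Lemma det_shift_coeffs : \det shift_coeffs = \det (first_row_mx - subdiag_mx).
Proof.
have cancel_right : shift_coeffs *m block_mx 1%:M (- 1%:M) 0 1%:M =
    block_mx 1%:M 0 (c%:M - first_row_mx) (first_row_mx - subdiag_mx).
  rewrite mulmx_block !mulmx1 !mulmx0 !addr0 !mulmxN !mulmx1 addNr.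
  by rewrite opprB addrA subrK.
have := congr1 determinant cancel_right.
by rewrite det_mulmx det_ublock !det1 !mulr1 det_lblock det1 mul1r.
Qed.

End ShiftRows.

Lemma det_first_row_sub_subdiag (R : comNzRingType) n (a : nat -> R) :
  \det (first_row_mx n.+1 a - subdiag_mx R n.+1) = a n.+1.
Proof.
(* Along the last column only the corner a_(n+1) survives; its minor is -1. *)
rewrite (expand_det_col _ ord_max) (bigD1 ord0) //= big1 ?addr0; last first.
  move=> i /negPf nz_i; rewrite !mxE /= (gtn_eqF (ltn_ord i)).
  by rewrite (nz_i : (i == 0 :> nat) = false) mul0r subr0 mul0r.
rewrite !mxE /= mul1r subr0 /cofactor.
have -> : row' ord0 (col' ord_max (first_row_mx n.+1 a - subdiag_mx R n.+1)) = (-1)%:M.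
  apply/matrixP => i j; rewrite !mxE /= /bump leqNgt (ltn_ord j) /= add0n add1n eqSS mul0r sub0r.
  by rewrite eq_sym mulNrn.
by rewrite det_scalar -exprD addnn -signr_odd odd_double mulr1.
Qed.

Lemma det_shift_rows_sub_succ (R : comNzRingType) n (c : R) (a : nat -> R) :
  a 0 = 1 -> (forall k, (n < k)%N -> a k = 0) ->
  \det (col_mx (shift_rows n a) (shift_rows n (fun k => c * a k - a k.+1))) =
  a n ^+ n.+1.
Proof.
move=> a0 a_gt; rewrite shift_rows_factor // det_mulmx det_shift_coeffs.
rewrite det_shift_basis // exprS; congr (_ * _).
by case: n a_gt => [|n] _; [rewrite det_mx00 | exact: det_first_row_sub_subdiag].
Qed.

Lemma pascal_entry_ones_twos i j k : (0 < i)%N ->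
  pascal_entry (i :: nseq j 1%N ++ nseq k 2%N) = ((i.-1 + k)`! %/ i.-1`!)%N.
Proof.
move=> i_gt0; rewrite /pascal_entry /= !big_cons !big_cat !big_nseq /=.
rewrite size_cat !size_nseq.
have iter_mul1 l : iter l (muln 1) 1 = 1%N by elim: l => //= l ->.
rewrite !iter_mul1 !iter_addn_0 muln1; congr (_`! %/ _)%N; lia.
Qed.

Lemma pascal2_coef1 n k : pascal2_coef n.+1 1 k = n ^_ k.
Proof. by rewrite /pascal2_coef pascal_entry_ones_twos // divn1 bin_ffact. Qed.

Lemma pascal2_coef2 n k : pascal2_coef n.+1 2 k = (k.+1 * n ^_ k)%N.
Proof.
by rewrite /pascal2_coef pascal_entry_ones_twos // divn1 factS mulnCA bin_ffact.
Qed.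

Lemma ffactS_weight n k :
  (k.+1 * n ^_ k)%:Z = n.+1%:Z * (n ^_ k)%:Z - (n ^_ k.+1)%:Z.
Proof.
have [k_le_n | n_lt_k] := leqP k n; last by rewrite !ffact_small ?muln0 ?mulr0 // ltnW.
have -> : n.+1 = (k.+1 + (n - k))%N by lia.
by rewrite ffactnSr !PoszM PoszD mulrDl (mulrC (n ^_ k)%:Z) addrK.
Qed.

Lemma pascal2_sylvesterE n :
  pascal2_sylvester n.+1 =
  col_mx (shift_rows n (fun k => (n ^_ k)%:Z))
         (shift_rows n (fun k => n.+1%:Z * (n ^_ k)%:Z - (n ^_ k.+1)%:Z)).
Proof.
apply/matrixP => i j; rewrite !mxE; case: splitP => r ->; rewrite !mxE /= ?addKn;
  case: (leqP r j) => //= _; case: leqP => [_|lt_n_jr].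
- by rewrite pascal2_coef1.
- by rewrite ffact_small.
- by rewrite pascal2_coef2 ffactS_weight.
- by rewrite !ffact_small ?mulr0 ?subr0 // ltnW.
Qed.

Theorem theorem5p1 (m : nat) : (2 <= m)%N -> f2 m = ((m.-1)`! ^ m)%:Z.
Proof.
case: m => [|[|n]] // _.
rewrite /f2 pascal2_sylvesterE det_shift_rows_sub_succ //.
  by rewrite ffactnn -!natz natrX.
by move=> k /ffact_small ->.
Qed.
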